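(* Let $n\geq 0$ be an integer, $r,s\in\mathbf{N}$, $k\in\mathbf{Z}$ and $\lambda\in\mathbf{C}$ with $\lambda\neq 1$. Then \[\tilde{A}_{n}^{(r,k)}(x)=\sum_{m=0}^{n}\left\{\sum_{l=0}^{n-m}\sum_{a=0}^{l}\frac{\binom{n}{l}\binom{s}{a}\binom{l}{a}a!}{(1-\lambda)^{a}}S_{1}(n-l,m)\tilde{A}_{l-a}^{(r,k)}\right\}H_{m}^{(s)}(x\mid\lambda).\]
   Context: For $k\in\mathbf{Z}$, $Lif_{k}(x)=\sum_{m=0}^{\infty}\frac{x^{m}}{m!(m+1)^{k}}$. For integers $r\geq 0$, $k\in\mathbf{Z}$, the polynomials $\tilde{A}_{n}^{(r,k)}(x)$ are defined by \[\left(\frac{t}{(1+t)\log(1+t)}\right)^{r}Lif_{k}\left(-\log(1+t)\right)(1+t)^{x}=\sum_{n=0}^{\infty}\tilde{A}_{n}^{(r,k)}(x)\frac{t^{n}}{n!},\] and $\tilde{A}_{n}^{(r,k)}=\tilde{A}_{n}^{(r,k)}(0)$. For $\lambda\neq 1$, the Frobenius–Euler polynomials of order $s$ are defined by $\left(\frac{1-\lambda}{e^{t}-\lambda}\right)^{s}e^{xt}=\sum_{n=0}^{\infty}H_{n}^{(s)}(x\mid\lambda)\frac{t^{n}}{n!}$. $S_{1}(n,m)$ denotes the signed Stirling numbers of the first kind, defined by $x(x-1)\cdots(x-n+1)=\sum_{m=0}^{n}S_{1}(n,m)x^{m}$. *)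

(* Formal power series are represented by their coefficient
   sequences  nat -> F  over a field F; the complex numbers are R[i] for a
   realType R (mathcomp-real-closed's complex). *)
From HB Require Import structures.
From mathcomp Require Import all_boot all_order all_algebra.
From mathcomp Require Import complex.
From mathcomp Require Import reals.
Set Implicit Arguments. Unset Strict Implicit. Unset Printing Implicit Defensive.
Import Order.TTheory GRing.Theory Num.Theory.
Local Open Scope ring_scope.

Section Series.
Variable F : fieldType.

Definition sone : nat -> F := fun n => (n == 0%N)%:R.
Definition smul (a b : nat -> F) : nat -> F :=
  fun n => \sum_(i < n.+1) a i * b (n - i)%N.
Definition spow (a : nat -> F) (m : nat) : nat -> F := iter m (smul a) sone.
(* composition f(g(t)), meaningful when g has zero constant term *)
Definition scomp (f g : nat -> F) : nat -> F :=
  fun n => \sum_(m < n.+1) f m * spow g m n.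
(* multiplicative inverse of a series with nonzero constant term:
   a = a0 (1 - u), 1/a = a0^-1 * sum_j u^j *)
Definition sinv (a : nat -> F) : nat -> F :=
  let u := fun n => if n is 0 then 0 else - (a n / a 0%N) in
  fun n => (a 0%N)^-1 * scomp (fun _ => 1) u n.
End Series.

Section Defs.
Variable F : fieldType.

(* log(1+t)/t = sum_n (-1)^n t^n/(n+1) *)
Definition log1p_div_t : nat -> F := fun n => (-1) ^+ n / (n.+1)%:R.
Definition one_plus_t : nat -> F := fun n => if n is 0 then 1 else if n is 1 then 1 else 0.
(* t / ((1+t) log(1+t)) *)
Definition Afactor : nat -> F := sinv (smul one_plus_t log1p_div_t).
(* - log(1+t) = sum_{n>=1} (-1)^n t^n / n *)
Definition neg_log1p : nat -> F :=
  fun n => if n is 0 then 0 else (-1) ^+ n / n%:R.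
Definition Lif (k : int) : nat -> F :=
  fun m => ((m`!)%:R * ((m.+1)%:R ^ k))^-1.
(* (1+t)^x = sum_n binom(x,n) t^n *)
Definition binser (x : F) : nat -> F :=
  fun n => (\prod_(i < n) (x - i%:R)) / (n`!)%:R.
Definition expser (x : F) : nat -> F := fun n => x ^+ n / (n`!)%:R.

Definition Atilde (r : nat) (k : int) (x : F) (n : nat) : F :=
  (n`!)%:R * smul (smul (spow Afactor r) (scomp (Lif k) neg_log1p)) (binser x) n.
Definition Atilde0 (r : nat) (k : int) (n : nat) : F := Atilde r k 0 n.

Definition FE_base (lam : F) : nat -> F :=
  let e := fun n => if n is 0 then 1 - lam else ((n`!)%:R)^-1 in
  fun n => (1 - lam) * sinv e n.
Definition FrobEuler (s : nat) (lam x : F) (n : nat) : F :=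
  (n`!)%:R * smul (spow (FE_base lam) s) (expser x) n.
End Defs.

Definition S1 (n m : nat) : int := (\prod_(i < n) ('X - (i%:Z)%:P))`_m.
Arguments Atilde0 {F}.
Arguments Atilde {F}.
Arguments FrobEuler {F}.

From HB Require Import structures.
From mathcomp Require Import all_boot all_order all_algebra.
From mathcomp Require Import complex.
From mathcomp Require Import reals boolp.
From mathcomp Require Import zify ring.
Import Order.TTheory GRing.Theory Num.Theory.
Local Open Scope ring_scope.

(* Let B(t) generate the numbers \tilde A_n^{(r,k)}, so that \tilde A_n^{(r,k)}(x)
   is generated by B(t) (1+t)^x = B(t) sum_j binom(x, j) t^j.  Replace x^m by
   H_m^{(s)}(x | lam) in binom(x, j) = sum_m S1(j, m) x^m / j! to get a sequence
   U_s(j).  The Frobenius-Euler recurrence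
   (1 - lam) H_m^{(s)}(x) = H_m^{(s+1)}(x + 1) - lam H_m^{(s+1)}(x)
   and Pascal's rule for binom(x + 1, j) give U_s = (1 + t/(1 - lam)) U_{s+1},
   hence (1+t)^x = U_0 = (1 + t/(1 - lam))^s U_s.  Multiplying by B(t) and
   extracting the coefficient of t^n/n! yields the formula. *)

Lemma sumr_ord_widen {V : nmodType} k N (f : nat -> V) : (k <= N)%N ->
  (forall i, (k <= i < N)%N -> f i = 0) ->
  \sum_(i < k) f i = \sum_(i < N) f i.
Proof.
move=> le_kN f0; rewrite (big_ord_widen N f le_kN) big_mkcond.
by apply: eq_bigr => i _; case: ltnP => // le_ki; rewrite f0 // le_ki ltn_ord.
Qed.

Section FormalPowerSeries.
Variable F : fieldType.
Implicit Types (a b c u : nat -> F) (p q r : {poly F}).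

Lemma smul_coefM N a b n : (n < N)%N ->
  smul a b n = (\poly_(i < N) a i * \poly_(i < N) b i)`_n.
Proof.
move=> ltnN; rewrite coefM /smul; apply: eq_bigr => i _.
rewrite !coef_poly (leq_ltn_trans (leq_ord i) ltnN).
by rewrite (leq_ltn_trans (leq_subr _ _) ltnN).
Qed.

Lemma coefMl_low N p q r n :
  (forall i, (i < N)%N -> p`_i = q`_i) -> (n < N)%N -> (p * r)`_n = (q * r)`_n.
Proof.
move=> eq_pq ltnN; rewrite !coefM; apply: eq_bigr => i _.
by rewrite eq_pq // (leq_ltn_trans (leq_ord i) ltnN).
Qed.

Lemma smulC a b : smul a b = smul b a.
Proof. by apply/funext => n; rewrite !(@smul_coefM n.+1) // mulrC. Qed.

Lemma smulA a b c : smul (smul a b) c = smul a (smul b c).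
Proof.
apply/funext => n; rewrite !(@smul_coefM n.+1) //.
have trunc_smul a' b' i : (i < n.+1)%N ->
    (\poly_(j < n.+1) smul a' b' j)`_i
    = (\poly_(j < n.+1) a' j * \poly_(j < n.+1) b' j)`_i.
  by move=> ltin; rewrite coef_poly ltin (@smul_coefM n.+1).
rewrite (@coefMl_low n.+1 _ _ _ n (trunc_smul a b)) // [in RHS]mulrC.
by rewrite (@coefMl_low n.+1 _ _ _ n (trunc_smul b c)) // [in RHS]mulrC mulrA.
Qed.

Lemma smul1l a : smul (sone F) a = a.
Proof.
apply/funext => n; rewrite /smul big_ord_recl /sone /= mul1r subn0 big1 ?addr0 //.
by move=> i _; rewrite mul0r.
Qed.

Lemma smul1r a : smul a (sone F) = a.
Proof. by rewrite smulC smul1l. Qed.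

Lemma smulZl a b k n : smul (fun j => k * a j) b n = k * smul a b n.
Proof. by rewrite /smul mulr_sumr; apply: eq_bigr => i _; rewrite mulrA. Qed.

Lemma smulZr a b k n : smul a (fun j => k * b j) n = k * smul a b n.
Proof. by rewrite /smul mulr_sumr; apply: eq_bigr => i _; rewrite mulrCA. Qed.

Lemma smulBl a b c n : smul (fun j => a j - b j) c n = smul a c n - smul b c n.
Proof. by rewrite /smul -sumrB; apply: eq_bigr => i _; rewrite mulrBl. Qed.

Lemma smulBr a b c n : smul a (fun j => b j - c j) n = smul a b n - smul a c n.
Proof. by rewrite /smul -sumrB; apply: eq_bigr => i _; rewrite mulrBr. Qed.

Lemma smul_sumr a M (b : nat -> nat -> F) n :
  smul a (fun j => \sum_(m < M) b m j) n = \sum_(m < M) smul a (b m) n.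
Proof. by rewrite /smul exchange_big; apply: eq_bigr => i _; rewrite mulr_sumr. Qed.

Lemma eq_smulr_low a b c n :
  (forall j, (j <= n)%N -> b j = c j) -> smul a b n = smul a c n.
Proof. by move=> eq_bc; apply: eq_bigr => i _; rewrite eq_bc // leq_subr. Qed.

Lemma spow_small u m n : u 0%N = 0 -> (n < m)%N -> spow u m n = 0.
Proof.
move=> u0; elim: m n => [//|m IHm] n ltnm /=.
rewrite /smul big1 // => -[[|i] ltin] _ /=; first by rewrite u0 mul0r.
by rewrite IHm ?mulr0 //; lia.
Qed.

(* Writing a = a0 (1 - u), the partial sums of sum_j u^j telescope. *)
Lemma smul_sinv a : a 0%N != 0 -> smul a (sinv a) = sone F.
Proof.
move=> a0_neq0; apply/funext => n.
set u : nat -> F := fun n => if n is 0 then 0 else - (a n / a 0%N).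
have aE : a = (fun j => a 0%N * (sone F j - u j)).
  apply/funext => -[|j]; rewrite /sone /u /=; first by rewrite subr0 mulr1.
  by rewrite sub0r opprK mulrCA divff // mulr1.
rewrite (@eq_smulr_low _ _ (fun j => (a 0%N)^-1 * \sum_(m < n.+1) spow u m j)).
  rewrite smulZr [X in smul X _ _]aE smulZl mulrA mulVf // mul1r smul_sumr.
  under eq_bigr => m _ do rewrite smulBl smul1l.
  rewrite -(big_mkord xpredT (fun m => spow u m n - spow u m.+1 n)).
  rewrite -[LHS]opprK -sumrN.
  under eq_bigr => m _ do rewrite opprB.
  by rewrite telescope_sumr // (@spow_small u n.+1 n) // sub0r opprK.
move=> j le_jn; rewrite /sinv /scomp -/u; congr (_ * _).
under eq_bigr => m _ do rewrite mul1r.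
apply: (@sumr_ord_widen _ _ _ (spow u ^~ j)) => // m /andP[lt_jm _].
exact: spow_small.
Qed.

End FormalPowerSeries.

Section LinearSeries.
Variable F : fieldType.
Implicit Types (b : nat -> F) (c : F).

Definition linser c : nat -> F :=
  fun n => if n is 0 then 1 else if n is 1 then c else 0.

Lemma smul_linser0 c b : smul (linser c) b 0 = b 0%N.
Proof. by rewrite /smul big_ord_recl big_ord0 addr0 /= mul1r. Qed.

Lemma smul_linserS c b n : smul (linser c) b n.+1 = b n.+1 + c * b n.
Proof.
rewrite /smul !big_ord_recl big1 ?addr0 /=; last by move=> i _; rewrite mul0r.
by rewrite mul1r subn0 subSS subn0.
Qed.

Lemma spow_linser c s a : spow (linser c) s a = ('C(s, a))%:R * c ^+ a.
Proof.
elim: s a => [|s IHs] [|a]; rewrite /= ?bin0 ?expr0 ?mulr1 //.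
- by rewrite /sone mul0r.
- by rewrite smul_linser0 IHs bin0 expr0 mulr1.
by rewrite smul_linserS !IHs binS natrD exprS; ring.
Qed.

End LinearSeries.
Arguments linser {F}.

Section FrobeniusEuler.
Variable F : numFieldType.
Implicit Types (x y lam : F).

Lemma natr_fact_neq0 n : (n`!)%:R != 0 :> F.
Proof. by rewrite pnatr_eq0 -lt0n fact_gt0. Qed.

Lemma natr_bin_fact n i : (i <= n)%N ->
  (n`!)%:R = ('C(n, i))%:R * ((i`!)%:R * ((n - i)`!)%:R) :> F.
Proof. by move=> le_in; rewrite -!natrM bin_fact. Qed.

Lemma expserD x y : expser (x + y) = smul (expser x) (expser y).
Proof.
apply/funext => n; rewrite /expser /smul addrC exprDn mulr_suml.
apply: eq_bigr => -[i lt_in] _ /=.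
rewrite -mulr_natr (@natr_bin_fact n i) //.
have C_neq0 : ('C(n, i))%:R != 0 :> F by rewrite pnatr_eq0 -lt0n bin_gt0.
by field; rewrite C_neq0 !natr_fact_neq0.
Qed.

Lemma FrobEuler0 lam x m : FrobEuler 0 lam x m = x ^+ m.
Proof. by rewrite /FrobEuler /= smul1l /expser mulrC divfK // natr_fact_neq0. Qed.

Lemma FrobEulerD1 s lam x m :
  FrobEuler s lam (x + 1) m = \sum_(i < m.+1) ('C(m, i))%:R * FrobEuler s lam x i.
Proof.
rewrite /FrobEuler expserD -smulA {1}/smul mulr_sumr.
apply: eq_bigr => -[i lt_im] _ /=.
rewrite [expser 1 _]/expser expr1n (@natr_bin_fact m i) //.
by field; rewrite natr_fact_neq0.
Qed.

(* The base series is (1 - lam) / (e^t - lam), so multiplying it by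
   e^t - lam leaves the constant 1 - lam. *)
Lemma FrobEulerS s lam x m : lam != 1 ->
  (1 - lam) * FrobEuler s lam x m =
  FrobEuler s.+1 lam (x + 1) m - lam * FrobEuler s.+1 lam x m.
Proof.
move=> lam_neq1.
set e : nat -> F := fun n => if n is 0 then 1 - lam else ((n`!)%:R)^-1.
have e0_neq0 : e 0%N != 0 by rewrite /e subr_eq0 eq_sym.
have eE : e = (fun j => expser 1 j - lam * sone F j).
  apply/funext => -[|j]; rewrite /e /expser /sone /= expr1n ?divr1 ?mulr1 //.
  by rewrite mulr0 subr0 div1r.
have base_e : smul (FE_base lam) e = (fun n => (1 - lam) * sone F n).
  by apply/funext => n; rewrite smulZl smulC smul_sinv.
have shift_e : (fun j => expser (x + 1) j - lam * expser x j) = smul (expser x) e.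
  by apply/funext => j; rewrite eE smulBr smulZr smul1r expserD.
have key : smul (spow (FE_base lam) s.+1)
    (fun j => expser (x + 1) j - lam * expser x j)
    = (fun n => (1 - lam) * smul (spow (FE_base lam) s) (expser x) n).
  rewrite shift_e /= smulA [smul (expser x) e]smulC -(smulA _ _ e) [smul _ e]smulC.
  rewrite (smulA _ e) -smulA base_e; apply/funext => n.
  by rewrite smulZl smul1l.
have := congr1 (fun f => f m) key; rewrite /= smulBr smulZr => key_m.
by rewrite /FrobEuler mulrCA -key_m; ring.
Qed.

End FrobeniusEuler.

Definition falling_poly (n : nat) : {poly int} := \prod_(i < n) ('X - (i%:Z)%:P).

Lemma S1E n m : S1 n m = (falling_poly n)`_m.
Proof. by []. Qed.

Lemma size_falling_poly n : size (falling_poly n) = n.+1.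
Proof. by rewrite size_prod_XsubC /index_enum unlock -enumT size_enum_ord. Qed.

Lemma S1_eq0 n m : (n < m)%N -> S1 n m = 0.
Proof. by move=> lt_nm; rewrite S1E nth_default // size_falling_poly. Qed.

Lemma falling_factorialE (R : comNzRingType) n (x : R) :
  \prod_(i < n) (x - i%:R) = \sum_(m < n.+1) (S1 n m)%:~R * x ^+ m.
Proof.
have -> : \prod_(i < n) (x - i%:R) = (map_poly intr (falling_poly n)).[x].
  rewrite map_prod_XsubC horner_prod; apply: eq_bigr => i _.
  by rewrite hornerXsubC.
rewrite (@horner_coef_wide _ n.+1); last first.
  rewrite size_map_poly_id0 ?size_falling_poly //.
  by rewrite (monicP (monic_prod_XsubC _ _ _)) rmorph1 oner_neq0.
by apply: eq_bigr => m _; rewrite coef_map.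
Qed.

Lemma coef_XD1_exp m i : ((('X + 1) ^+ m : {poly int})`_i = ('C(m, i))%:R).
Proof.
elim: m i => [|m IHm] i; first by rewrite expr0 coefC; case: i.
rewrite exprSr mulrDr mulr1 coefD coefMX.
by case: i => [|i] /=; rewrite ?add0r IHm ?bin0 // !IHm binS natrD addrC.
Qed.

Lemma falling_polyD1 n :
  falling_poly n.+1 \Po ('X + 1) = falling_poly n.+1 + falling_poly n *+ n.+1.
Proof.
rewrite {1}/falling_poly big_ord_recl comp_polyM.
have -> : \prod_(i < n) ('X - ((lift ord0 i : nat)%:Z)%:P) \Po ('X + 1)
    = falling_poly n.
  rewrite rmorph_prod; apply: eq_bigr => i _.
  rewrite rmorphB /= comp_polyX comp_polyC /bump leq0n add1n -addn1 PoszD polyCD.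
  by ring.
rewrite /falling_poly big_ord_recr /= -/(falling_poly n).
rewrite rmorphB /= comp_polyX comp_polyC subr0 -mulr_natr.
have -> : ((n%:Z)%:P : {poly int}) = n%:R by rewrite -polyC_natr natz.
by ring.
Qed.

Lemma S1_binom_sum (R : pzRingType) n i :
  \sum_(m < n.+2) (S1 n.+1 m)%:~R * ('C(m, i))%:R
  = (S1 n.+1 i)%:~R + (S1 n i)%:~R *+ n.+1 :> R.
Proof.
have := congr1 (fun p : {poly int} => p`_i) (falling_polyD1 n).
rewrite /= coef_comp_poly size_falling_poly coefD coefMn => S1_int.
rewrite -rmorphMn -rmorphD !S1E -S1_int rmorph_sum; apply: eq_bigr => m _.
by rewrite coef_XD1_exp rmorphM /= rmorph_nat.
Qed.

Section UmbralBinomial.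
Variable F : numFieldType.
Implicit Types (h : nat -> F) (x : F).

(* The image of binom(x, j) = (x)_j / j! under the linear map x^m |-> h m. *)
Definition binom_umbral h (j : nat) : F :=
  \sum_(m < j.+1) (S1 j m)%:~R / (j`!)%:R * h m.

(* The image of (x + 1)^m under the same map. *)
Definition binom_shift h (m : nat) : F :=
  \sum_(i < m.+1) ('C(m, i))%:R * h i.

Lemma binom_umbral_fact h j :
  (j`!)%:R * binom_umbral h j = \sum_(m < j.+1) (S1 j m)%:~R * h m.
Proof.
rewrite mulr_sumr; apply: eq_bigr => m _.
by rewrite mulrA mulrCA divff ?natr_fact_neq0 // mulr1.
Qed.

Lemma binom_umbral_pow x : binom_umbral (fun m => x ^+ m) = binser x.
Proof.
apply/funext => j; rewrite /binser falling_factorialE mulr_suml.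
by apply: eq_bigr => m _; rewrite mulrAC.
Qed.

Lemma binser0 : binser 0 = sone F :> (nat -> F).
Proof.
apply/funext => -[|j]; first by rewrite /binser /sone big_ord0 divr1.
by rewrite /binser /sone big_ord_recl /= subrr mul0r mul0r.
Qed.

Lemma binom_shift_wide h m N : (m < N)%N ->
  binom_shift h m = \sum_(i < N) ('C(m, i))%:R * h i.
Proof.
move=> lt_mN; rewrite /binom_shift.
apply: (@sumr_ord_widen _ _ _ (fun i => ('C(m, i))%:R * h i)) => //.
by move=> i /andP[lt_mi _]; rewrite bin_small ?mul0r.
Qed.

(* Pascal's rule binom(x + 1, j + 1) = binom(x, j + 1) + binom(x, j). *)
Lemma binom_umbral_shift h :
  binom_umbral (binom_shift h) = smul (linser 1) (binom_umbral h).
Proof.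
apply/funext => j.
have -> : binom_umbral (binom_shift h) j
    = \sum_(i < j.+1) (\sum_(m < j.+1) (S1 j m)%:~R / (j`!)%:R * ('C(m, i))%:R) * h i.
  rewrite /binom_umbral.
  under eq_bigr => m _ do rewrite (@binom_shift_wide h m j.+1 (ltn_ord m)) mulr_sumr.
  rewrite exchange_big; apply: eq_bigr => i _; rewrite mulr_suml.
  by apply: eq_bigr => m _; rewrite mulrA.
case: j => [|j].
  by rewrite smul_linser0 /binom_umbral !big_ord1 bin0 mulr1.
rewrite smul_linserS mul1r.
have pascal i : \sum_(m < j.+2) (S1 j.+1 m)%:~R / (j.+1)`!%:R * ('C(m, i))%:R
    = (S1 j.+1 i)%:~R / (j.+1)`!%:R + (S1 j i)%:~R / (j`!)%:R :> F.
  transitivity ((\sum_(m < j.+2) (S1 j.+1 m)%:~R * ('C(m, i))%:R) / (j.+1)`!%:R : F).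
    by rewrite mulr_suml; apply: eq_bigr => m _; rewrite mulrAC.
  rewrite S1_binom_sum factS natrM -mulr_natl.
  by field; rewrite natr_fact_neq0 addrC natr1 pnatr_eq0.
under eq_bigr => i _ do rewrite pascal mulrDl.
by rewrite big_split /= [X in _ + X]big_ord_recr /= S1_eq0 // rmorph0 !mul0r addr0.
Qed.

End UmbralBinomial.
Arguments binom_umbral {F}.
Arguments binom_shift {F}.

Section BinomialExpansion.
Variable F : numFieldType.
Implicit Types (x lam : F).

Lemma binom_umbral_FrobEulerS s lam x : lam != 1 ->
  binom_umbral (FrobEuler s lam x)
  = smul (linser (1 - lam)^-1) (binom_umbral (FrobEuler s.+1 lam x)).
Proof.
move=> lam_neq1; have lam1_neq0 : 1 - lam != 0 by rewrite subr_eq0 eq_sym.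
apply/funext => j; apply: (mulfI lam1_neq0).
have -> : (1 - lam) * binom_umbral (FrobEuler s lam x) j
    = binom_umbral (binom_shift (FrobEuler s.+1 lam x)) j
      - lam * binom_umbral (FrobEuler s.+1 lam x) j.
  rewrite /binom_umbral !mulr_sumr -sumrB; apply: eq_bigr => m _.
  by rewrite mulrCA FrobEulerS // FrobEulerD1 mulrBr mulrCA.
rewrite binom_umbral_shift.
case: j => [|j]; rewrite ?smul_linser0 ?smul_linserS; first by rewrite mulrBl mul1r.
by field.
Qed.

Lemma binser_FrobEuler s lam x : lam != 1 ->
  binser x = smul (spow (linser (1 - lam)^-1) s) (binom_umbral (FrobEuler s lam x)).
Proof.
move=> lam_neq1; elim: s => [|s IHs].
  rewrite /= smul1l -binom_umbral_pow; congr binom_umbral.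
  by apply/funext => m; rewrite FrobEuler0.
by rewrite IHs binom_umbral_FrobEulerS // -smulA [smul _ (linser _)]smulC.
Qed.

Lemma egf_smul (a b : nat -> F) n :
  (n`!)%:R * smul a b n
  = \sum_(l < n.+1) ('C(n, l))%:R * ((l`!)%:R * a l) * (((n - l)`!)%:R * b (n - l)%N).
Proof.
rewrite /smul mulr_sumr; apply: eq_bigr => -[l lt_ln] _ /=.
by rewrite (@natr_bin_fact _ n l) //; ring.
Qed.

End BinomialExpansion.

Lemma exchange_big_triangle {V : nmodType} n (f : nat -> nat -> V) :
  \sum_(l < n.+1) \sum_(m < (n - l).+1) f l m
  = \sum_(m < n.+1) \sum_(l < (n - m).+1) f l m.
Proof.
have widen (g : nat -> V) l : (l < n.+1)%N -> \sum_(m < (n - l).+1) g m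
    = \sum_(m < n.+1) (if (l + m <= n)%N then g m else 0).
  move=> lt_ln; rewrite (big_ord_widen n.+1 g) ?ltnS ?leq_subr // big_mkcond.
  by apply: eq_bigr => m _; rewrite ltnS leq_subRL // -ltnS.
rewrite (eq_bigr _ (fun l _ => widen _ _ (ltn_ord l))) exchange_big.
apply: eq_bigr => m _; rewrite (widen (f^~ m) _ (ltn_ord m)).
by apply: eq_bigr => l _; rewrite addnC.
Qed.

Lemma coef_egf_binom_umbral (F : numFieldType) (d : F) s (G H : nat -> F) n :
  (n`!)%:R * smul (smul (spow (linser d^-1) s) G) (binom_umbral H) n =
  \sum_(m < n.+1)
    (\sum_(l < (n - m)%N.+1) \sum_(a < l.+1)
        ('C(n, l) * 'C(s, a) * 'C(l, a) * a`!)%:R / d ^+ a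
        * (S1 (n - l)%N m)%:~R * ((l - a)`!%:R * G (l - a)%N))
    * H m.
Proof.
set T := fun l m => \sum_(a < l.+1)
  ('C(n, l) * 'C(s, a) * 'C(l, a) * a`!)%:R / d ^+ a
  * (S1 (n - l)%N m)%:~R * ((l - a)`!%:R * G (l - a)%N) * H m.
transitivity (\sum_(l < n.+1) \sum_(m < (n - l).+1) T l m).
  rewrite egf_smul; apply: eq_bigr => l _.
  rewrite egf_smul binom_umbral_fact mulr_sumr; apply: eq_bigr => m _.
  rewrite mulr_sumr mulr_suml; apply: eq_bigr => a _.
  by rewrite spow_linser exprVn !natrM; ring.
rewrite exchange_big_triangle; apply: eq_bigr => m _.
by rewrite mulr_suml; apply: eq_bigr => l _; rewrite mulr_suml.
Qed.

Local Open Scope complex_scope.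

Theorem theorem8 (R : realType) (n r s : nat) (k : int) (lam x : R[i])
  (hlam : lam != 1) :
  Atilde r k x n =
  \sum_(m < n.+1)
    (\sum_(l < (n - m)%N.+1) \sum_(a < l.+1)
        ('C(n, l) * 'C(s, a) * 'C(l, a) * a`!)%:R / (1 - lam) ^+ a
        * (S1 (n - l)%N m)%:~R * Atilde0 r k (l - a)%N)
    * FrobEuler s lam x m.
Proof.
rewrite /Atilde0 /Atilde binser0 smul1r (binser_FrobEuler _ s _ x hlam).
by rewrite -smulA [smul _ (spow _ _)]smulC coef_egf_binom_umbral.
Qed.
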